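(* Let $\pi=(\pi_1,\dots,\pi_n)$ and $\lambda=(\lambda_1,\dots,\lambda_n)$ be partitions with at most $n$ parts such that $\lambda\not\subseteq\pi$ (i.e. $\lambda_i>\pi_i$ for some $i$). Then $W_\lambda(q^\pi t^{\delta(n)};q,p,t,a,b)=0$.
   Context: Fix $|p|<1$; parameters generic. $E(x)=(x;p)_\infty(p/x;p)_\infty$. For integer $m\ge0$, $(a)_m=\prod_{k=0}^{m-1}E(aq^k)$, for $m<0$, $(a)_m=1/(aq^m)_{-m}$; for a partition $\lambda$ with $n$ parts $(a)_\lambda=\prod_{i=1}^n(at^{1-i})_{\lambda_i}$; several arguments denote products; integer subscripts denote the single-integer symbol. $q^\pi t^{\delta(n)}=(q^{\pi_1}t^{n-1},q^{\pi_2}t^{n-2},\dots,q^{\pi_n})$. For $n$-part partitions with $\lambda_1\ge\mu_1\ge\dots\ge\lambda_n\ge\mu_n$, $\lambda_{n+1}=\mu_{n+1}=0$, $H_{\lambda/\mu}(q,p,t,b)=\prod_{1\le i<j\le n}\Big\{\frac{(q^{\mu_i-\mu_{j-1}}t^{j-i})_{\mu_{j-1}-\lambda_j}(q^{\lambda_i+\lambda_j}t^{3-j-i}b)_{\mu_{j-1}-\lambda_j}}{(q^{\mu_i-\mu_{j-1}+1}t^{j-i-1})_{\mu_{j-1}-\lambda_j}(q^{\lambda_i+\lambda_j+1}t^{2-j-i}b)_{\mu_{j-1}-\lambda_j}}\frac{(q^{\lambda_i-\mu_{j-1}+1}t^{j-i-1})_{\mu_{j-1}-\lambda_j}}{(q^{\lambda_i-\mu_{j-1}}t^{j-i})_{\mu_{j-1}-\lambda_j}}\Big\}\prod_{1\le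 i<j-1\le n}\frac{(q^{\mu_i+\lambda_j+1}t^{1-j-i}b)_{\mu_{j-1}-\lambda_j}}{(q^{\mu_i+\lambda_j}t^{2-j-i}b)_{\mu_{j-1}-\lambda_j}}$; for $x\in\mathbb{C}$, $W_{\lambda/\mu}(x;q,p,t,a,b)=H_{\lambda/\mu}\frac{(x^{-1},ax)_\lambda(qbx/t,qb/(axt))_\mu}{(x^{-1},ax)_\mu(qbx,qb/(ax))_\lambda}\prod_{i=1}^n\frac{E(bt^{1-2i}q^{2\mu_i})}{E(bt^{1-2i})}\frac{(bt^{1-2i})_{\mu_i+\lambda_{i+1}}}{(bqt^{-2i})_{\mu_i+\lambda_{i+1}}}t^{i(\mu_i-\lambda_{i+1})}$ (zero if the interlacing fails); recursively $W_{\lambda/\mu}(y,z_1,\dots,z_\ell;q,p,t,a,b)=\sum_\nu W_{\lambda/\nu}(yt^{-\ell};q,p,t,at^{2\ell},bt^\ell)W_{\nu/\mu}(z_1,\dots,z_\ell;q,p,t,a,b)$ over $\nu$ with $\lambda_1\ge\nu_1\ge\dots\ge\lambda_n\ge\nu_n\ge0$; $W_\lambda=W_{\lambda/0}$ where $0=(0,\dots,0)$. *)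

From HB Require Import structures.
From mathcomp Require Import all_boot all_order all_algebra.
From mathcomp Require Import complex.
From mathcomp Require Import Rstruct.
From Stdlib Require Rdefinitions.
From Stdlib Require Import ClassicalEpsilon.
Set Implicit Arguments. Unset Strict Implicit. Unset Printing Implicit Defensive.
Import Order.TTheory GRing.Theory Num.Theory.
Local Open Scope ring_scope.

Definition CC : Type := (Rdefinitions.R)[i].

(** Convergence of a complex sequence, and its limit (chosen by classical
    choice; only ever used on convergent sequences). *)
Definition cconv (u : nat -> CC) (l : CC) : Prop :=
  forall e : Rdefinitions.R, 0 < e ->
    exists N : nat, forall m : nat, (N <= m)%N -> `|u m - l| < (e%:C)%C.

Definition clim (u : nat -> CC) : CC :=
  epsilon (inhabits (0 : CC)) (fun l => cconv u l).

(** Theta function  E(x) = (x;p)_oo (p/x;p)_oo  as the limit of its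
    partial products. *)
Definition theta (p x : CC) : CC :=
  clim (fun N => \prod_(k < N) ((1 - x * p ^+ k) * (1 - p ^+ k.+1 / x))).

(** Elliptic shifted factorial for an integer m:
    (a)_m = prod_{k=0}^{m-1} E(a q^k)  (m >= 0),  (a)_m = 1/(a q^m)_{-m} (m < 0). *)
Definition epoch (p q a : CC) (m : int) : CC :=
  match m with
  | Posz k => \prod_(i < k) theta p (a * q ^+ i)
  | Negz k => (\prod_(i < k.+1) theta p (a * q ^ (- (k.+1)%:Z) * q ^+ i))^-1
  end.

(** Partitions with n parts are encoded as sequences of naturals of size n;
    [part l i] is the i-th part (1-indexed), and it is 0 for i > size l. *)
Definition part (l : seq nat) (i : nat) : nat := nth 0%N l i.-1.

Definition is_partition (n : nat) (l : seq nat) : Prop :=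
  size l = n /\ sorted geq l.

Definition interlace (n : nat) (lam mu : seq nat) : bool :=
  [&& size lam == n, size mu == n &
      all (fun i => (part mu i <= part lam i)%N && (part lam i.+1 <= part mu i)%N)
          (iota 1 n)].

Definition epoch_part (p q t a : CC) (n : nat) (lam : seq nat) : CC :=
  \prod_(1 <= i < n.+1) epoch p q (a * t ^ (1 - (i%:Z))) (part lam i)%:Z.

(** The ratio (a)_lam / (a)_mu for mu contained in lam, written out as the
    product of the factors that survive cancellation:
    prod_i prod_{k = mu_i}^{lam_i - 1} E(a t^{1-i} q^k). *)
Definition epoch_ratio (p q t a : CC) (n : nat) (lam mu : seq nat) : CC :=
  \prod_(1 <= i < n.+1)
    \prod_(part mu i <= k < part lam i) theta p (a * t ^ (1 - (i%:Z)) * q ^+ k).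

Definition Hfac (p q t b : CC) (n : nat) (lam mu : seq nat) : CC :=
  let L i := (part lam i)%:Z in
  let M i := (part mu i)%:Z in
  let e a m := epoch p q a m in
  (\prod_(1 <= j < n.+1) \prod_(1 <= i < j)
     let m := M (j.-1) - L j in
     (e (q ^ (M i - M j.-1) * t ^ (j%:Z - i%:Z)) m
        * e (q ^ (L i + L j) * t ^ (3 - j%:Z - i%:Z) * b) m)
     / (e (q ^ (M i - M j.-1 + 1) * t ^ (j%:Z - i%:Z - 1)) m
        * e (q ^ (L i + L j + 1) * t ^ (2 - j%:Z - i%:Z) * b) m)
     * (e (q ^ (L i - M j.-1 + 1) * t ^ (j%:Z - i%:Z - 1)) m
        / e (q ^ (L i - M j.-1) * t ^ (j%:Z - i%:Z)) m))
  * (\prod_(1 <= j < n.+2) \prod_(1 <= i < j.-1)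
     let m := M (j.-1) - L j in
     e (q ^ (M i + L j + 1) * t ^ (1 - j%:Z - i%:Z) * b) m
     / e (q ^ (M i + L j) * t ^ (2 - j%:Z - i%:Z) * b) m).

Definition W1 (p q t a b : CC) (n : nat) (lam mu : seq nat) (x : CC) : CC :=
  if interlace n lam mu then
    let L i := (part lam i)%:Z in
    let M i := (part mu i)%:Z in
    Hfac p q t b n lam mu
    * epoch_ratio p q t x^-1 n lam mu
    * epoch_ratio p q t (a * x) n lam mu
    * (epoch_part p q t (q * b * x / t) n mu
       * epoch_part p q t (q * b / (a * x * t)) n mu)
    / (epoch_part p q t (q * b * x) n lam
       * epoch_part p q t (q * b / (a * x)) n lam)
    * \prod_(1 <= i < n.+1)
        (theta p (b * t ^ (1 - 2 * i%:Z) * q ^ (2 * M i))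
         / theta p (b * t ^ (1 - 2 * i%:Z))
         * (epoch p q (b * t ^ (1 - 2 * i%:Z)) (M i + L i.+1)
            / epoch p q (b * q * t ^ (- 2 * i%:Z)) (M i + L i.+1))
         * t ^ (i%:Z * (M i - L i.+1)))
  else 0.

Fixpoint cands (n B : nat) : seq (seq nat) :=
  match n with
  | 0 => [:: [::]]
  | n'.+1 => [seq x :: s | x <- iota 0 B.+1, s <- cands n' B]
  end.

(** Multivariable W_{lam/mu}(x_1, ..., x_l; q,p,t,a,b) via the branching rule
    W_{lam/mu}(y,z_1..z_l; a,b)
      = sum_nu W_{lam/nu}(y t^{-l}; a t^{2l}, b t^l) W_{nu/mu}(z_1..z_l; a,b). *)
Fixpoint Wskew (p q t a b : CC) (n : nat) (xs : seq CC) (lam mu : seq nat)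
  {struct xs} : CC :=
  match xs with
  | [::] => (lam == mu)%:R
  | [:: y] => W1 p q t a b n lam mu y
  | y :: zs =>
      let l := size zs in
      \sum_(nu <- cands n (part lam 1) | interlace n lam nu)
        W1 p q t (a * t ^+ (2 * l)) (b * t ^+ l) n lam nu (y * t ^- l)
        * Wskew p q t a b n zs nu mu
  end.

Definition Wfun (p q t a b : CC) (n : nat) (xs : seq CC) (lam : seq nat) : CC :=
  Wskew p q t a b n xs lam (nseq n 0%N).

(** The point q^pi t^{delta(n)} = (q^{pi_1} t^{n-1}, ..., q^{pi_n}). *)
Definition spec_point (q t : CC) (n : nat) (pi : seq nat) : seq CC :=
  [seq q ^+ part pi i * t ^+ (n - i) | i <- iota 1 n].

(** Genericity of the parameters: no nontrivial monomial q^i t^j a^k b^l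
    is an integer power of p (i.e. a zero of the theta function). *)
Definition generic_params (p q t a b : CC) : Prop :=
  forall i j k l m : int, (i, j, k, l) != (0, 0, 0, 0) ->
    q ^ i * t ^ j * a ^ k * b ^ l != p ^ m.

From HB Require Import structures.
From mathcomp Require Import all_boot all_order all_algebra.
From mathcomp Require Import complex.
From mathcomp Require Import Rstruct.
From Stdlib Require Import ClassicalEpsilon.
Set Implicit Arguments. Unset Strict Implicit. Unset Printing Implicit Defensive.
Import Order.TTheory GRing.Theory Num.Theory.
Local Open Scope ring_scope.

(* The one-variable function W_{lam/mu}(x) contains the factor
   (x^-1)_lam / (x^-1)_mu, which at x = q^s with mu_1 <= s < lam_1 contains
   E(q^-s q^s) = E(1) = 0.  Expand W_lam(x_1, ..., x_n) at x_i = q^{pi_i} t^{n-i}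
   by the branching rule, peeling off x_1, which enters the first factor as
   q^{pi_1}.  If lam_m > pi_m with m >= 2, interlacing gives nu_{m-1} >= lam_m
   > pi_m, so every remaining W_nu(x_2, ...) satisfies the same hypothesis with
   the shifted partition (pi_2, ..., pi_n).  If lam_1 > pi_1, either
   nu_1 <= pi_1 and the first factor vanishes, or nu_1 > pi_1 >= pi_2.  The
   recursion ends with one variable, where the first case applies. *)

Lemma clim_eventually_const (u : nat -> CC) (c : CC) (N : nat) :
  (forall m, (N <= m)%N -> u m = c) -> clim u = c.
Proof.
move=> u_c.
have cvg_c : cconv u c.
  by move=> e e_gt0; exists N => m /u_c ->; rewrite subrr normr0 ltcR.
have cvg_l : cconv u (clim u) by apply: epsilon_spec; exists c.
apply/eqP; apply: contraT => neq_lc.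
have [e e_gt0 norm_lc] : exists2 e : Rdefinitions.R, 0 < e & `|clim u - c| = (e%:C)%C.
  exists (Num.sqrt (complex.Re (clim u - c) ^+ 2 + complex.Im (clim u - c) ^+ 2)).
    by rewrite -ltcR -normc_def normr_gt0 subr_eq0.
  exact: normc_def.
have [M cvgM] := cvg_l e e_gt0.
have := cvgM (maxn N M) (leq_maxr _ _).
by rewrite u_c ?leq_maxl // -normrN opprB norm_lc ltxx.
Qed.

Lemma theta1 (p : CC) : theta p 1 = 0.
Proof.
apply: (@clim_eventually_const _ _ 1) => -[|m] // _.
by rewrite big_ord_recl /= expr0 mul1r subrr !mul0r.
Qed.

Lemma epoch_ratio_qpow_eq0 (p q t : CC) (n : nat) (lam mu : seq nat) (s : nat) :
  q != 0 -> (0 < n)%N -> (part mu 1 <= s < part lam 1)%N ->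
  epoch_ratio p q t (q ^+ s)^-1 n lam mu = 0.
Proof.
move=> q_neq0 n_gt0 s_range; apply/eqP; rewrite prodf_seq_eq0.
apply/hasP; exists 1%N; first by rewrite mem_index_iota ltnS.
rewrite /= prodf_seq_eq0; apply/hasP; exists s; first by rewrite mem_index_iota.
by rewrite /= subrr expr0z mulr1 mulVf ?expf_neq0 // theta1.
Qed.

Lemma W1_qpow_eq0 (p q t a b : CC) (n : nat) (lam mu : seq nat) (s : nat) :
  q != 0 -> (part mu 1 <= s < part lam 1)%N ->
  W1 p q t a b n lam mu (q ^+ s) = 0.
Proof.
move=> q_neq0 s_range; rewrite /W1; case: ifP => // /and3P[/eqP size_lam _ _].
have n_gt0 : (0 < n)%N.
  by rewrite -size_lam; case: (lam) s_range; rewrite /part //= ltn0 andbF.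
by rewrite epoch_ratio_qpow_eq0 // mulr0 !mul0r.
Qed.

Lemma interlace_part_le (n : nat) (lam mu : seq nat) (i : nat) :
  interlace n lam mu -> (0 < i)%N -> (part lam i.+1 <= part mu i)%N.
Proof.
rewrite /interlace => /and3P[/eqP size_lam _ /allP interl] i_gt0.
have [i_le_n | n_lt_i] := leqP i n.
  by have /interl /andP[] : i \in iota 1 n by rewrite mem_iota i_gt0 add1n ltnS.
by rewrite /part [nth _ lam _]nth_default // size_lam ltnW.
Qed.

Lemma Wskew_cons (p q t a b : CC) (n : nat) (y : CC) (zs : seq CC) (lam mu : seq nat) :
  zs != [::] ->
  Wskew p q t a b n (y :: zs) lam mu =
  \sum_(nu <- cands n (part lam 1) | interlace n lam nu)
    W1 p q t (a * t ^+ (2 * size zs)) (b * t ^+ size zs) n lam nu (y * t ^- size zs)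
    * Wskew p q t a b n zs nu mu.
Proof. by case: zs. Qed.

Fixpoint qt_point (q t : CC) (rho : seq nat) : seq CC :=
  if rho is r :: rho' then q ^+ r * t ^+ size rho' :: qt_point q t rho' else [::].

Lemma qt_point_cons (q t : CC) (r : nat) (rho : seq nat) :
  qt_point q t (r :: rho) = q ^+ r * t ^+ size rho :: qt_point q t rho.
Proof. by []. Qed.

Lemma size_qt_point (q t : CC) (rho : seq nat) : size (qt_point q t rho) = size rho.
Proof. by elim: rho => //= r rho ->. Qed.

Lemma spec_point_qt_point (q t : CC) (pi : seq nat) :
  spec_point q t (size pi) pi = qt_point q t pi.
Proof.
rewrite /spec_point; elim: pi => //= r pi <-; rewrite subSS subn0.
rewrite -(addn1 1) iotaDl -map_comp; congr (_ :: _).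
by apply/eq_in_map => -[|i]; rewrite mem_iota // => _; rewrite add1n subSS.
Qed.

Lemma Wskew_qt_point_eq0 (p q t a b : CC) (n : nat) (rho mu nu : seq nat) :
  q != 0 -> t != 0 -> sorted geq rho -> {in rho, forall r, part mu 1 <= r}%N ->
  (exists2 m, (0 < m <= size rho)%N & (part rho m < part nu m)%N) ->
  Wskew p q t a b n (qt_point q t rho) nu mu = 0.
Proof.
move=> q_neq0 t_neq0; elim: rho nu => [|r rho IH] nu sorted_rho mu_le; first by case=> -[|m].
case=> -[|m] // m_range lt_m.
case: rho IH sorted_rho mu_le m_range lt_m => [|r' rho] IH sorted_rho mu_le m_range lt_m.
  case: m m_range lt_m => // _ lt_r.
  by rewrite /= expr0 mulr1 W1_qpow_eq0 // mu_le ?mem_head.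
rewrite qt_point_cons Wskew_cons // size_qt_point mulfK ?expf_neq0 //.
have [r'_le_r sorted_rho'] : (r' <= r)%N /\ sorted geq (r' :: rho).
  by move: sorted_rho => /= /andP[].
have mu_le' : {in r' :: rho, forall r, part mu 1 <= r}%N.
  by move=> x x_in; apply: mu_le; rewrite inE x_in orbT.
apply: big1 => nu' nu_nu'.
case: m m_range lt_m => [|m] m_range lt_m.
  have [nu'_le_r | r_lt_nu'] := leqP (part nu' 1) r.
    by rewrite W1_qpow_eq0 ?nu'_le_r ?mul0r.
  by rewrite IH ?mulr0 //; exists 1%N => //; apply: leq_ltn_trans r_lt_nu'.
rewrite IH ?mulr0 //; exists m.+1 => //.
exact: leq_trans lt_m (interlace_part_le nu_nu' (ltn0Sn m)).
Qed.

Theorem mainTheorem5 (n : nat) (pi lam : seq nat) (p q t a b : CC) :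
  `|p| < 1 -> q != 0 -> t != 0 -> a != 0 -> b != 0 ->
  generic_params p q t a b ->
  is_partition n pi -> is_partition n lam ->
  (exists i : nat, (1 <= i <= n)%N /\ (part pi i < part lam i)%N) ->
  Wfun p q t a b n (spec_point q t n pi) lam = 0.
Proof.
(* With total division the vanishing factor kills W1 outright; genericity
   and |p| < 1 only guarantee that the other factors are finite. *)
move=> _ q_neq0 t_neq0 _ _ _ [size_pi sorted_pi] _ [i [i_range lt_i]].
rewrite /Wfun -size_pi spec_point_qt_point.
apply: Wskew_qt_point_eq0 => //; last by exists i; rewrite ?size_pi.
by move=> r _; rewrite /part nth_nseq if_same.
Qed.
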